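(* Let $n\ge2$ and $x_j:=-\cos\frac{j\pi}{n}$ for $0\le j\le n$. For every integer $k$ with $1\le k\le n/2$, \[ \sum_{j=0}^{k-1}\frac{1}{x_k-x_j}\le\frac{1+k\log(4k-1)}{2\sin\frac{k\pi}{n}\,\sin\frac{k\pi}{2n}}\le\frac{n^2}{4\sqrt2\,k^2}\bigl(1+k\log(4k-1)\bigr) \] and \[ \sum_{j=k+1}^{n}\frac{1}{x_j-x_k}\le\frac{3n^2}{4\sqrt2\,k}\log(4k+1). \] In particular, for such $k$, $\sum_{j\neq k}\frac{1}{|x_k-x_j|}\le\frac{n^2}{4\sqrt2}(1+\log3+3\log5)<1.3\,n^2$. Moreover, $\sum_{j=1}^n\frac{1}{x_j-x_0}\le\frac{\pi^2n^2}{12}<0.9\,n^2$.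
   Context: $\log$ denotes the natural logarithm. *)

From Stdlib Require Export Reals.
From Coquelicot Require Export Coquelicot.
Open Scope R_scope.

Definition xnode (n j : nat) : R := - cos (INR j * PI / INR n).

From Stdlib Require Import Reals Lra Lia.
From Coquelicot Require Import Coquelicot.
Open Scope R_scope.

(* With [h = PI / (2n)], [x_k - x_j = 2 sin ((k - j) h) sin ((k + j) h)]. As [sin] is concave
   on [0, PI], it lies above its chords through the origin, so both factors are bounded below
   by linear functions of [k - j] and [k + j]. Each [1 / |x_k - x_j|] is then dominated by a
   multiple of [1/(k - j) + 1/(k + j)] or [1/(j - k) - 1/(j + k)]; these sum to harmonic
   numbers, and [H_m <= ln (2m + 1)] because [ln ((x + 1)/(x - 1)) >= 2/x]. For the endpoint
   [x_0], the bound [sin t >= t - t^3/6] gives [1/(x_j - x_0) <= 2n^2/(PI^2 j^2) + 1], and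
   [sum 1/j^2 <= 7/4 - 1/n]. *)

Lemma le_of_derive_nonneg (f df : R -> R) (a b : R) : a <= b ->
  (forall c, a <= c <= b -> is_derive f c (df c)) ->
  (forall c, a <= c <= b -> 0 <= df c) -> f a <= f b.
Proof.
  intros Hab Hd Hp. destruct (Rle_lt_or_eq_dec _ _ Hab) as [Hlt|<-]; [|lra].
  destruct (MVT_cor2 f df a b Hlt) as [c [Hfc Hc]].
  - intros c Hc. apply is_derive_Reals, Hd; exact Hc.
  - assert (0 <= df c) by (apply Hp; lra). nra.
Qed.

Lemma sin_ge_mul_cos (x : R) : 0 <= x <= PI -> x * cos x <= sin x.
Proof.
  intros Hx.
  assert (H := le_of_derive_nonneg (fun t => sin t - t * cos t) (fun t => t * sin t) 0 x (proj1 Hx)).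
  cbv beta in H; rewrite sin_0, cos_0 in H.
  enough (0 - 0 * 1 <= sin x - x * cos x) by lra.
  apply H.
  - intros c _. auto_derive; auto. ring.
  - intros c Hc. apply Rmult_le_pos; [lra|]. apply sin_ge_0; lra.
Qed.

Lemma sin_ge_chord (x y : R) : 0 <= x <= y -> y <= PI -> 0 < y -> x / y * sin y <= sin x.
Proof.
  intros Hxy HyPI Hy.
  assert (H := le_of_derive_nonneg (fun t => t * sin x - x * sin t)
                 (fun t => sin x - x * cos t) x y (proj2 Hxy)).
  cbv beta in H.
  enough (x * sin x - x * sin x <= y * sin x - x * sin y).
  { apply Rmult_le_reg_l with y; [exact Hy|].
    replace (y * (x / y * sin y)) with (x * sin y) by (field; lra). lra. }
  apply H.
  - intros c _. auto_derive; auto. ring.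
  - intros c Hc. assert (cos c <= cos x) by (apply cos_decr_1; lra).
    assert (x * cos x <= sin x) by (apply sin_ge_mul_cos; lra). nra.
Qed.

Lemma sin_ge_cubic (t : R) : 0 <= t <= PI -> t - t ^ 3 / 6 <= sin t.
Proof.
  intros Ht. destruct (sin_bound t 0 (proj1 Ht) (proj2 Ht)) as [H _].
  eapply Rle_trans; [|exact H].
  unfold sin_approx; simpl; unfold sin_term.
  rewrite !INR_IZR_INZ. simpl. lra.
Qed.

Lemma ln_ratio_ge (x : R) : 1 < x -> 2 / x <= ln (x + 1) - ln (x - 1).
Proof.
  intros Hx.
  set (u := / x).
  assert (Hu0 : 0 < u) by (apply Rinv_0_lt_compat; lra).
  assert (Hu1 : u < 1) by (unfold u; rewrite <- Rinv_1; apply Rinv_lt_contravar; lra).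
  assert (H := le_of_derive_nonneg (fun t => ln (1 + t) - ln (1 - t) - 2 * t)
     (fun t => / (1 + t) + / (1 - t) - 2) 0 u (Rlt_le _ _ Hu0)).
  cbv beta in H. rewrite Rplus_0_r, Rminus_0_r, ln_1 in H.
  replace (ln (x + 1)) with (ln (1 + u) + ln x)
    by (rewrite <- ln_mult by lra; f_equal; unfold u; field; lra).
  replace (ln (x - 1)) with (ln (1 - u) + ln x)
    by (rewrite <- ln_mult by lra; f_equal; unfold u; field; lra).
  replace (2 / x) with (2 * u) by (unfold u; field; lra).
  enough (0 - 0 - 2 * 0 <= ln (1 + u) - ln (1 - u) - 2 * u) by lra.
  apply H.
  - intros c Hc. auto_derive; try lra. field. lra.
  - intros c Hc.
    replace (/ (1 + c) + / (1 - c) - 2) with (2 * c * c / ((1 + c) * (1 - c))) by (field; lra).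
    apply Rdiv_le_0_compat; nra.
Qed.

Lemma PI_gt_31_10 : 31 / 10 < PI.
Proof.
  enough (31 / 20 < PI / 2) by lra.
  apply PI2_lower_bound; [split; lra|].
  destruct (pre_cos_bound (31 / 20) 1) as [Hlow _]; [lra|lra|].
  apply Rlt_le_trans with (2 := Hlow).
  unfold cos_approx; simpl; unfold cos_term.
  rewrite !INR_IZR_INZ. cbv -[IZR]. field_simplify. lra.
Qed.

Lemma PI_lt_32_10 : PI < 32 / 10.
Proof.
  assert (Hcos : cos (16 / 10) < 0).
  { destruct (pre_cos_bound (16 / 10) 0) as [_ Hup]; [lra|lra|].
    eapply Rle_lt_trans; [exact Hup|].
    unfold cos_approx; simpl; unfold cos_term.
    rewrite !INR_IZR_INZ. cbv -[IZR]. field_simplify. lra. }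
  destruct (Rlt_or_le PI (32 / 10)) as [Hlt|Hge]; [exact Hlt|].
  destruct (Rle_lt_or_eq_dec (16 / 10) (PI / 2)) as [Hl|He]; [lra| |].
  - assert (cos (PI / 2) < cos (16 / 10)) by (apply cos_decreasing_1; lra).
    rewrite cos_PI2 in *. lra.
  - rewrite He, cos_PI2 in Hcos. lra.
Qed.

Lemma ln_le_of_exp_ge (y c : R) : 0 < y -> y <= 1 + c + c ^ 2 / 2 + c ^ 3 / 6 + c ^ 4 / 24 ->
  0 <= c -> ln y <= c.
Proof.
  intros Hy Hyc Hc. rewrite <- (ln_exp c). apply ln_le; [exact Hy|].
  eapply Rle_trans; [|apply (exp_ge_taylor c 4 Hc)]. simpl. lra.
Qed.

Lemma ln_3_le : ln 3 <= 12 / 10.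
Proof. apply ln_le_of_exp_ge; lra. Qed.

Lemma ln_5_le : ln 5 <= 165 / 100.
Proof. apply ln_le_of_exp_ge; lra. Qed.

Lemma sum_n_m_succ_r (a : nat -> R) n m : (n <= S m)%nat ->
  sum_n_m a n (S m) = sum_n_m a n m + a (S m).
Proof. exact (sum_n_Sm a n m). Qed.

Lemma sum_n_m_succ_l (a : nat -> R) n m : (n <= m)%nat ->
  sum_n_m a n m = a n + sum_n_m a (S n) m.
Proof. exact (sum_Sn_m a n m). Qed.

Lemma sum_n_m_add (a b : nat -> R) n m :
  sum_n_m (fun j => a j + b j) n m = sum_n_m a n m + sum_n_m b n m.
Proof. exact (sum_n_m_plus a b n m). Qed.

Lemma sum_n_m_scal (c : R) (a : nat -> R) n m :
  sum_n_m (fun j => c * a j) n m = c * sum_n_m a n m.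
Proof. exact (sum_n_m_mult_l c a n m). Qed.

Lemma sum_n_m_sub (a b : nat -> R) n m :
  sum_n_m (fun j => a j - b j) n m = sum_n_m a n m - sum_n_m b n m.
Proof.
  rewrite (sum_n_m_ext _ (fun j => a j + -1 * b j)) by (intros j; lra).
  rewrite sum_n_m_add, sum_n_m_scal. lra.
Qed.

Lemma sum_n_m_le_loc (a b : nat -> R) n m : (forall j, (n <= j <= m)%nat -> a j <= b j) ->
  sum_n_m a n m <= sum_n_m b n m.
Proof.
  intros Hab. rewrite (sum_n_m_ext_loc a (fun j => Rmin (a j) (b j)) n m).
  - apply sum_n_m_le. intros; apply Rmin_r.
  - intros j Hj. rewrite Rmin_left; auto.
Qed.

Lemma sum_n_m_shift (a : nat -> R) c n m :
  sum_n_m (fun j => a (j + c)%nat) n m = sum_n_m a (n + c) (m + c).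
Proof.
  revert a n m; induction c as [|c IH]; intros a n m.
  - rewrite !Nat.add_0_r. apply sum_n_m_ext; intros; now rewrite Nat.add_0_r.
  - transitivity (sum_n_m (fun i => a (i + c)%nat) (S n) (S m)).
    { rewrite <- sum_n_m_S. apply sum_n_m_ext. intros j. f_equal. lia. }
    rewrite IH. f_equal; lia.
Qed.

Lemma sum_n_m_rev (a : nat -> R) m : sum_n_m (fun j => a (m - j)%nat) 0 m = sum_n_m a 0 m.
Proof.
  revert a; induction m as [|m IH]; intros a.
  - rewrite !sum_n_n. reflexivity.
  - rewrite sum_n_m_succ_l, Nat.sub_0_r, <- sum_n_m_S by lia.
    rewrite (sum_n_m_ext (fun j => a (S m - S j)%nat) (fun j => a (m - j)%nat)) by reflexivity.
    rewrite IH, sum_n_m_succ_r by lia. lra.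
Qed.

Lemma sum_n_m_skip (a : nat -> R) k n : (1 <= k <= n)%nat ->
  sum_n_m (fun j => if Nat.eqb j k then 0 else a j) 0 n
  = sum_n_m a 0 (k - 1) + sum_n_m a (k + 1) n.
Proof.
  intros Hk. destruct k as [|k]; [lia|].
  replace (S k - 1)%nat with k by lia. replace (S k + 1)%nat with (S (S k)) by lia.
  rewrite (sum_n_m_Chasles _ 0 k n), (sum_n_m_succ_l _ (S k) n), Nat.eqb_refl by lia.
  assert (Hskip : forall p q, (S k < p \/ q < S k)%nat ->
    sum_n_m (fun j => if Nat.eqb j (S k) then 0 else a j) p q = sum_n_m a p q).
  { intros p q Hpq. apply sum_n_m_ext_loc. intros j Hj.
    destruct (Nat.eqb_spec j (S k)); [lia|reflexivity]. }
  rewrite !Hskip by lia. rewrite Rplus_0_l. reflexivity.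
Qed.

Definition harmonic (m : nat) : R := sum_n_m (fun i => / INR i) 1 m.

Lemma harmonic_S m : harmonic (S m) = harmonic m + / INR (S m).
Proof. apply sum_n_m_succ_r. lia. Qed.

Lemma harmonic_le m p : (m <= p)%nat -> harmonic m <= harmonic p.
Proof.
  induction 1 as [|p _ IH]; [lra|]. rewrite harmonic_S.
  assert (0 < / INR (S p)) by (apply Rinv_0_lt_compat, lt_0_INR; lia). lra.
Qed.

(* Telescoping [ln_ratio_ge] at [x = 2i]. *)
Lemma harmonic_le_ln m : harmonic m <= ln (2 * INR m + 1).
Proof.
  induction m as [|m IH].
  - unfold harmonic. rewrite sum_n_m_zero by lia. simpl.
    rewrite Rmult_0_r, Rplus_0_l, ln_1. apply Rle_refl.
  - rewrite harmonic_S, S_INR.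
    assert (0 <= INR m) by apply pos_INR.
    assert (Hstep := ln_ratio_ge (2 * INR m + 2)).
    replace (2 * INR m + 2 - 1) with (2 * INR m + 1) in Hstep by ring.
    replace (2 * INR m + 2 + 1) with (2 * (INR m + 1) + 1) in Hstep by ring.
    replace (2 / (2 * INR m + 2)) with (/ (INR m + 1)) in Hstep by (field; lra).
    specialize (Hstep ltac:(lra)). lra.
Qed.

Lemma harmonic_Chasles p q : (p <= q)%nat ->
  harmonic q = harmonic p + sum_n_m (fun i => / INR i) (S p) q.
Proof. intros Hpq. apply (sum_n_m_Chasles (fun i => / INR i) 1 p q); lia. Qed.

Lemma sum_inv_add (c p q : nat) :
  sum_n_m (fun j => / (INR j + INR c)) p q = sum_n_m (fun i => / INR i) (p + c) (q + c).
Proof.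
  rewrite <- sum_n_m_shift. apply sum_n_m_ext. intros j. rewrite plus_INR. reflexivity.
Qed.

Lemma sum_inv_sub_eq_harmonic (k : nat) :
  sum_n_m (fun j => / (INR (S k) - INR j)) 0 k = harmonic (S k).
Proof.
  unfold harmonic. rewrite <- sum_n_m_S, <- (sum_n_m_rev (fun i => / INR (S i))).
  apply sum_n_m_ext_loc. intros j Hj.
  rewrite <- minus_INR by lia. do 2 f_equal. lia.
Qed.

Lemma sum_partial_fractions_left (k : nat) : (1 <= k)%nat ->
  sum_n_m (fun j => INR k / (INR k - INR j) + INR k / (INR k + INR j)) 0 (k - 1)
  = 1 + INR k * harmonic (2 * k - 1) :> R.
Proof.
  intros Hk. destruct k as [|k]; [lia|]. replace (S k - 1)%nat with k by lia.
  rewrite sum_n_m_add.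
  rewrite (sum_n_m_ext (fun j => INR (S k) / (INR (S k) - INR j))
             (fun j => INR (S k) * / (INR (S k) - INR j))) by reflexivity.
  rewrite (sum_n_m_ext (fun j => INR (S k) / (INR (S k) + INR j))
             (fun j => INR (S k) * / (INR j + INR (S k)))) by (intros j; rewrite Rplus_comm; reflexivity).
  rewrite sum_n_m_scal, sum_n_m_scal, sum_inv_sub_eq_harmonic, sum_inv_add.
  replace (2 * S k - 1)%nat with (k + S k)%nat by lia.
  rewrite Nat.add_0_l, (harmonic_Chasles k (k + S k)), harmonic_S by lia.
  field. apply not_0_INR. lia.
Qed.

Lemma sum_partial_fractions_right_le (k n : nat) : (2 * k <= n)%nat ->
  sum_n_m (fun j => / (INR j - INR k) - / (INR j + INR k)) (k + 1) n <= harmonic (2 * k).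
Proof.
  intros Hkn. rewrite sum_n_m_sub, sum_inv_add.
  assert (Hsub : sum_n_m (fun j => / (INR j - INR k)) (k + 1) n = harmonic (n - k)).
  { replace (k + 1)%nat with (1 + k)%nat by lia.
    replace n with (n - k + k)%nat at 1 by lia.
    rewrite <- (sum_n_m_shift (fun j => / (INR j - INR k))). unfold harmonic.
    apply sum_n_m_ext. intros j. rewrite plus_INR. f_equal. ring. }
  rewrite Hsub.
  replace (k + 1 + k)%nat with (S (2 * k)) by lia.
  assert (harmonic (n - k) <= harmonic (n + k)) by (apply harmonic_le; lia).
  rewrite (harmonic_Chasles (2 * k) (n + k)) in * by lia.
  lra.
Qed.

(* Comparison with the telescoping sum of [1/(j-1) - 1/j]. *)
Lemma sum_inv_sq_le (n : nat) : (2 <= n)%nat -> sum_n_m (fun j => / INR j ^ 2) 1 n <= 7 / 4 - / INR n.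
Proof.
  induction 1 as [|m Hm IH].
  - rewrite sum_n_m_succ_r, sum_n_n by lia. simpl. lra.
  - rewrite sum_n_m_succ_r by lia.
    assert (2 <= INR m) by (apply (le_INR 2); lia).
    rewrite S_INR.
    assert (/ (INR m + 1) ^ 2 <= / INR m - / (INR m + 1)).
    { apply Rmult_le_reg_r with (INR m * (INR m + 1) ^ 2); [nra|].
      field_simplify; lra. }
    lra.
Qed.

Lemma xnode_sub (n j k : nat) : (1 <= n)%nat ->
  xnode n k - xnode n j
  = 2 * sin ((INR k - INR j) * (PI / (2 * INR n))) * sin ((INR k + INR j) * (PI / (2 * INR n))).
Proof.
  intros Hn. assert (0 < INR n) by (apply lt_0_INR; lia).
  unfold xnode.
  replace (- cos (INR k * PI / INR n) - - cos (INR j * PI / INR n))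
    with (cos (INR j * PI / INR n) - cos (INR k * PI / INR n)) by ring.
  rewrite form2.
  replace ((INR j * PI / INR n - INR k * PI / INR n) / 2)
    with (- ((INR k - INR j) * (PI / (2 * INR n)))) by (field; lra).
  replace ((INR j * PI / INR n + INR k * PI / INR n) / 2)
    with ((INR k + INR j) * (PI / (2 * INR n))) by (field; lra).
  rewrite sin_neg. ring.
Qed.

Lemma xnode_lt (n j k : nat) : (j < k <= n)%nat -> xnode n j < xnode n k.
Proof.
  intros Hjk. assert (HN : 0 < INR n) by (apply lt_0_INR; lia).
  assert (INR j < INR k) by (apply lt_INR; lia).
  assert (INR k <= INR n) by (apply le_INR; lia).
  assert (0 <= INR j) by apply pos_INR.
  pose proof PI_RGT_0.
  unfold xnode. apply Ropp_lt_contravar, cos_decreasing_1.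
  - apply Rdiv_le_0_compat; nra.
  - apply Rmult_le_reg_r with (INR n); [lra|]. field_simplify; nra.
  - apply Rdiv_le_0_compat; nra.
  - apply Rmult_le_reg_r with (INR n); [lra|]. field_simplify; nra.
  - apply Rmult_lt_compat_r; [apply Rinv_0_lt_compat; lra | nra].
Qed.

Lemma one_div_le_div (p q r : R) : 0 < p -> 0 < q -> q <= r * p -> 1 / p <= r / q.
Proof.
  intros Hp Hq Hqr. unfold Rdiv. apply Rmult_le_reg_r with (p * q); [nra|].
  replace (1 * / p * (p * q)) with q by (field; lra).
  replace (r * / q * (p * q)) with (r * p) by (field; lra). lra.
Qed.

Lemma ln_4k_sub_1_le (k : nat) : (1 <= k)%nat -> ln (4 * INR k - 1) <= INR k * ln 3.
Proof.
  intros Hk. assert (1 <= INR k) by (apply (le_INR 1); lia).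
  rewrite <- ln_pow by lra. apply ln_le; [lra|].
  induction Hk as [|m Hm IH]; [simpl; lra|].
  rewrite S_INR. simpl pow. assert (1 <= INR m) by (apply (le_INR 1); lia). lra.
Qed.

Lemma ln_4k_add_1_le (k : nat) : ln (4 * INR k + 1) <= INR k * ln 5.
Proof.
  assert (0 <= INR k) by apply pos_INR.
  rewrite <- ln_pow by lra. apply ln_le; [lra|].
  clear H. induction k as [|k IH]; [simpl; lra|].
  rewrite S_INR. simpl pow. assert (0 <= INR k) by apply pos_INR. lra.
Qed.

Section InteriorNode.

Variables n k : nat.
Hypothesis Hk : (1 <= k)%nat.
Hypothesis Hkn : (2 * k <= n)%nat.

Let HN : 0 < INR n.
Proof. apply lt_0_INR. lia. Qed.

Let HK : 1 <= INR k.
Proof. apply (le_INR 1). lia. Qed.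

Let HKN : 2 * INR k <= INR n.
Proof. rewrite <- (mult_INR 2). apply le_INR. lia. Qed.

Let Hsqrt2 : sqrt 2 * sqrt 2 = 2.
Proof. apply sqrt_sqrt. lra. Qed.

(* Chords of [sin] from [0] to [PI/2] and to [PI/4]. *)
Lemma sin_mul_sin_ge :
  4 * sqrt 2 * INR k ^ 2 / INR n ^ 2
  <= 2 * sin (INR k * PI / INR n) * sin (INR k * PI / (2 * INR n)).
Proof.
  pose proof PI_RGT_0 as HPI.
  set (s := sqrt 2) in *.
  assert (Hs : 0 < s) by (apply sqrt_lt_R0; lra).
  assert (H1 : 2 * INR k / INR n <= sin (INR k * PI / INR n)).
  { replace (2 * INR k / INR n) with ((INR k * PI / INR n) / (PI / 2) * sin (PI / 2))
      by (rewrite sin_PI2; field; lra).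
    apply sin_ge_chord; [split| |]; try lra.
    - apply Rdiv_le_0_compat; nra.
    - apply Rmult_le_reg_r with (INR n); [lra|]. field_simplify; nra. }
  assert (H2 : s * INR k / INR n <= sin (INR k * PI / (2 * INR n))).
  { replace (s * INR k / INR n) with ((INR k * PI / (2 * INR n)) / (PI / 4) * sin (PI / 4)).
    - apply sin_ge_chord; [split| |]; try lra.
      + apply Rdiv_le_0_compat; nra.
      + apply Rmult_le_reg_r with (4 * INR n); [lra|]. field_simplify; nra.
    - rewrite sin_PI4. fold s. apply Rmult_eq_reg_l with s; [|lra].
      field_simplify; [|lra..]. replace (s ^ 2) with 2 by (rewrite <- Hsqrt2; ring). field. lra. }
  assert (0 < 2 * INR k / INR n) by (apply Rdiv_lt_0_compat; lra).
  assert (0 < s * INR k / INR n) by (apply Rdiv_lt_0_compat; nra).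
  replace (4 * s * INR k ^ 2 / INR n ^ 2) with (2 * (2 * INR k / INR n) * (s * INR k / INR n))
    by (field; lra).
  apply Rmult_le_compat; nra.
Qed.

(* With [h = PI / (2n)], chords of [sin] from [0] to [kh] and to [2kh <= PI/2]. *)
Lemma inv_xnode_sub_left_le (j : nat) : (j < k)%nat ->
  1 / (xnode n k - xnode n j)
  <= (INR k / (INR k - INR j) + INR k / (INR k + INR j))
     / (2 * sin (INR k * PI / INR n) * sin (INR k * PI / (2 * INR n))).
Proof.
  intros Hj.
  assert (HJ0 : 0 <= INR j) by apply pos_INR.
  assert (HJK : INR j + 1 <= INR k) by (rewrite <- S_INR; apply le_INR; lia).
  pose proof PI_RGT_0 as HPI.
  set (h := PI / (2 * INR n)).
  assert (Hh : 0 < h) by (apply Rdiv_lt_0_compat; lra).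
  assert (HKh : 2 * INR k * h <= PI / 2).
  { unfold h. apply Rmult_le_reg_r with (2 * INR n / PI); [apply Rdiv_lt_0_compat; lra|].
    field_simplify; lra. }
  replace (INR k * PI / (2 * INR n)) with (INR k * h) by (unfold h; field; lra).
  replace (INR k * PI / INR n) with (2 * INR k * h) by (unfold h; field; lra).
  rewrite xnode_sub by lia. fold h.
  set (S1 := sin (INR k * h)). set (S2 := sin (2 * INR k * h)).
  assert (HS1 : 0 < S1) by (apply sin_gt_0; nra).
  assert (HS2 : 0 < S2) by (apply sin_gt_0; nra).
  set (a := (INR k - INR j) / INR k * S1).
  set (b := (INR k + INR j) / (2 * INR k) * S2).
  assert (HA : a <= sin ((INR k - INR j) * h)).
  { unfold a. replace ((INR k - INR j) / INR k) with ((INR k - INR j) * h / (INR k * h))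
      by (field; lra).
    apply sin_ge_chord; nra. }
  assert (HB : b <= sin ((INR k + INR j) * h)).
  { unfold b. replace ((INR k + INR j) / (2 * INR k)) with ((INR k + INR j) * h / (2 * INR k * h))
      by (field; lra).
    apply sin_ge_chord; nra. }
  assert (Ha : 0 < a) by (apply Rmult_lt_0_compat; [apply Rdiv_lt_0_compat|]; lra).
  assert (Hb : 0 < b) by (apply Rmult_lt_0_compat; [apply Rdiv_lt_0_compat|]; lra).
  replace ((INR k / (INR k - INR j) + INR k / (INR k + INR j)) / (2 * S2 * S1))
    with (1 / (2 * a * b)) by (unfold a, b; field; repeat split; lra).
  apply one_div_le_div; nra.
Qed.

(* Chords of [sin] from [0] to [PI/2] and to [3 PI/4], since [(j + k) h <= 3 PI/4]. *)
Lemma inv_xnode_sub_right_le (j : nat) : (k + 1 <= j <= n)%nat ->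
  1 / (xnode n j - xnode n k)
  <= 3 * INR n ^ 2 / (4 * sqrt 2 * INR k) * (/ (INR j - INR k) - / (INR j + INR k)).
Proof.
  intros Hj.
  assert (HJK : INR k + 1 <= INR j) by (rewrite <- S_INR; apply le_INR; lia).
  assert (HJN : INR j <= INR n) by (apply le_INR; lia).
  pose proof PI_RGT_0 as HPI.
  set (h := PI / (2 * INR n)).
  assert (Hh : 0 < h) by (apply Rdiv_lt_0_compat; lra).
  assert (Hnh : INR n * h = PI / 2) by (unfold h; field; lra).
  rewrite xnode_sub by lia. fold h.
  set (s := sqrt 2) in *.
  assert (Hs : 0 < s) by (apply sqrt_lt_R0; lra).
  set (a := (INR j - INR k) / INR n).
  set (b := (INR j + INR k) * s / (3 * INR n)).
  assert (HA : a <= sin ((INR j - INR k) * h)).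
  { replace a with ((INR j - INR k) * h / (PI / 2) * sin (PI / 2))
      by (unfold a; rewrite sin_PI2, <- Hnh; field; lra).
    apply sin_ge_chord; nra. }
  assert (HB : b <= sin ((INR j + INR k) * h)).
  { replace b with ((INR j + INR k) * h / (3 * PI / 4) * sin (3 * PI / 4)).
    - apply sin_ge_chord; nra.
    - replace (3 * PI / 4) with (PI - PI / 4) by field. rewrite sin_PI_x, sin_PI4. fold s.
      replace (PI - PI / 4) with (3 * (INR n * h) / 2) by (rewrite Hnh; field).
      unfold b. apply Rmult_eq_reg_l with s; [|lra].
      field_simplify; [|lra..]. replace (s ^ 2) with 2 by (rewrite <- Hsqrt2; ring). reflexivity. }
  assert (Ha : 0 < a) by (apply Rdiv_lt_0_compat; lra).
  assert (Hb : 0 < b) by (apply Rdiv_lt_0_compat; nra).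
  replace (3 * INR n ^ 2 / (4 * s * INR k) * (/ (INR j - INR k) - / (INR j + INR k)))
    with (1 / (2 * a * b)) by (unfold a, b; field; repeat split; lra).
  apply one_div_le_div; nra.
Qed.

Lemma left_sum_le :
  sum_n_m (fun j => 1 / (xnode n k - xnode n j)) 0 (k - 1)
  <= (1 + INR k * ln (4 * INR k - 1))
     / (2 * sin (INR k * PI / INR n) * sin (INR k * PI / (2 * INR n))).
Proof.
  set (C := 2 * sin (INR k * PI / INR n) * sin (INR k * PI / (2 * INR n))).
  assert (HC : 0 < C).
  { eapply Rlt_le_trans; [|apply sin_mul_sin_ge].
    assert (0 < sqrt 2) by (apply sqrt_lt_R0; lra).
    apply Rdiv_lt_0_compat; nra. }
  eapply Rle_trans.
  { apply (sum_n_m_le_loc _ (fun j => / C * (INR k / (INR k - INR j) + INR k / (INR k + INR j)))).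
    intros j Hj. rewrite Rmult_comm. apply inv_xnode_sub_left_le. lia. }
  rewrite sum_n_m_scal, sum_partial_fractions_left by lia.
  assert (harmonic (2 * k - 1) <= ln (4 * INR k - 1)).
  { eapply Rle_trans; [apply harmonic_le_ln|].
    rewrite minus_INR, mult_INR by lia. simpl INR. apply Req_le. f_equal. ring. }
  unfold Rdiv. rewrite Rmult_comm. apply Rmult_le_compat_r.
  - left. apply Rinv_0_lt_compat. exact HC.
  - nra.
Qed.

Lemma left_bound_le :
  (1 + INR k * ln (4 * INR k - 1))
    / (2 * sin (INR k * PI / INR n) * sin (INR k * PI / (2 * INR n)))
  <= INR n ^ 2 / (4 * sqrt 2 * INR k ^ 2) * (1 + INR k * ln (4 * INR k - 1)).
Proof.
  assert (0 < sqrt 2) by (apply sqrt_lt_R0; lra).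
  assert (0 <= ln (4 * INR k - 1)) by (rewrite <- ln_1; apply ln_le; lra).
  set (P := 1 + INR k * ln (4 * INR k - 1)).
  replace (INR n ^ 2 / (4 * sqrt 2 * INR k ^ 2) * P) with (P / (4 * sqrt 2 * INR k ^ 2 / INR n ^ 2))
    by (field; split; nra).
  apply Rmult_le_compat_l; [unfold P; nra|].
  apply Rinv_le_contravar; [apply Rdiv_lt_0_compat; nra|apply sin_mul_sin_ge].
Qed.

Lemma right_sum_le :
  sum_n_m (fun j => 1 / (xnode n j - xnode n k)) (k + 1) n
  <= 3 * INR n ^ 2 / (4 * sqrt 2 * INR k) * ln (4 * INR k + 1).
Proof.
  assert (0 < sqrt 2) by (apply sqrt_lt_R0; lra).
  eapply Rle_trans.
  { apply (sum_n_m_le_loc _ (fun j => 3 * INR n ^ 2 / (4 * sqrt 2 * INR k)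
                                      * (/ (INR j - INR k) - / (INR j + INR k)))).
    intros j Hj. apply inv_xnode_sub_right_le. lia. }
  rewrite sum_n_m_scal. apply Rmult_le_compat_l; [apply Rdiv_le_0_compat; nra|].
  eapply Rle_trans; [apply sum_partial_fractions_right_le; lia|].
  eapply Rle_trans; [apply harmonic_le_ln|].
  rewrite mult_INR. simpl INR. apply Req_le. f_equal. ring.
Qed.

Lemma sum_inv_abs_le :
  sum_n_m (fun j => if Nat.eqb j k then 0 else 1 / Rabs (xnode n k - xnode n j)) 0 n
  <= INR n ^ 2 / (4 * sqrt 2) * (1 + ln 3 + 3 * ln 5).
Proof.
  rewrite sum_n_m_skip by lia.
  rewrite (sum_n_m_ext_loc _ (fun j => 1 / (xnode n k - xnode n j)) 0 (k - 1)).
  2:{ intros j Hj. rewrite Rabs_pos_eq; [reflexivity|].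
      assert (xnode n j < xnode n k) by (apply xnode_lt; lia). lra. }
  rewrite (sum_n_m_ext_loc _ (fun j => 1 / (xnode n j - xnode n k)) (k + 1) n).
  2:{ intros j Hj. rewrite Rabs_minus_sym, Rabs_pos_eq; [reflexivity|].
      assert (xnode n k < xnode n j) by (apply xnode_lt; lia). lra. }
  pose proof left_sum_le. pose proof left_bound_le. pose proof right_sum_le.
  pose proof (ln_4k_sub_1_le k Hk). pose proof (ln_4k_add_1_le k).
  assert (0 < sqrt 2) by (apply sqrt_lt_R0; lra).
  set (c := INR n ^ 2 / (4 * sqrt 2)).
  assert (Hc : 0 <= c) by (apply Rdiv_le_0_compat; nra).
  assert (INR n ^ 2 / (4 * sqrt 2 * INR k ^ 2) * (1 + INR k * ln (4 * INR k - 1))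
          <= c * (1 + ln 3)).
  { replace (INR n ^ 2 / (4 * sqrt 2 * INR k ^ 2) * (1 + INR k * ln (4 * INR k - 1)))
      with (c * ((1 + INR k * ln (4 * INR k - 1)) / INR k ^ 2)) by (unfold c; field; lra).
    apply Rmult_le_compat_l; [exact Hc|].
    apply Rmult_le_reg_r with (INR k ^ 2); [nra|].
    unfold Rdiv. rewrite Rmult_assoc, Rinv_l by nra.
    assert (0 <= ln 3) by (rewrite <- ln_1; apply ln_le; lra). nra. }
  assert (3 * INR n ^ 2 / (4 * sqrt 2 * INR k) * ln (4 * INR k + 1) <= c * (3 * ln 5)).
  { replace (3 * INR n ^ 2 / (4 * sqrt 2 * INR k) * ln (4 * INR k + 1))
      with (c * (3 * (ln (4 * INR k + 1) / INR k))) by (unfold c; field; lra).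
    apply Rmult_le_compat_l; [exact Hc|]. apply Rmult_le_compat_l; [lra|].
    apply Rmult_le_reg_r with (INR k); [lra|].
    unfold Rdiv. rewrite Rmult_assoc, Rinv_l by lra. lra. }
  unfold c in *. lra.
Qed.

End InteriorNode.

Lemma inv_xnode_sub_first_le (n j : nat) : (1 <= j <= n)%nat ->
  1 / (xnode n j - xnode n 0) <= 2 * INR n ^ 2 / PI ^ 2 * / INR j ^ 2 + 1.
Proof.
  intros Hj.
  assert (HN : 0 < INR n) by (apply lt_0_INR; lia).
  assert (HJ : 1 <= INR j) by (apply (le_INR 1); lia).
  assert (HJN : INR j <= INR n) by (apply le_INR; lia).
  pose proof PI_RGT_0. pose proof PI_4.
  set (h := PI / (2 * INR n)).
  assert (Hh : 0 < h) by (apply Rdiv_lt_0_compat; lra).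
  assert (Hnh : INR n * h = PI / 2) by (unfold h; field; lra).
  rewrite xnode_sub by lia. fold h. simpl INR. rewrite Rminus_0_r, Rplus_0_r.
  set (t := INR j * h).
  assert (Ht0 : 0 < t) by (unfold t; nra).
  assert (Ht2 : t <= PI / 2) by (unfold t; nra).
  assert (Hsin : t - t ^ 3 / 6 <= sin t) by (apply sin_ge_cubic; lra).
  assert (Hcubic : 0 < t - t ^ 3 / 6) by nra.
  (* [(t - t^3/6)^2 (1 + 2t^2) - t^2 = t^4 (4 - t^2) (15/2 - t^2) / 18] *)
  assert (Hpoly : t ^ 2 <= (t - t ^ 3 / 6) ^ 2 * (1 + 2 * t ^ 2)).
  { assert (0 <= t ^ 2 * (t ^ 2 / 18) * ((4 - t ^ 2) * (15 / 2 - t ^ 2))).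
    { apply Rmult_le_pos; apply Rmult_le_pos; nra. }
    nra. }
  assert (t ^ 2 <= sin t ^ 2 * (1 + 2 * t ^ 2)).
  { eapply Rle_trans; [exact Hpoly|]. apply Rmult_le_compat_r; [nra|].
    apply pow_incr; lra. }
  replace (2 * INR n ^ 2 / PI ^ 2 * / INR j ^ 2 + 1) with ((1 + 2 * t ^ 2) / (2 * t ^ 2))
    by (unfold t; replace PI with (2 * (INR n * h)) by lra; field; lra).
  apply one_div_le_div; nra.
Qed.

(* At [N = 2] this reduces to [PI^4 >= 6 PI^2 + 30], true as [PI > 3.1]. *)
Lemma PI_sq_div_12_ge (N : R) : 2 <= N ->
  2 * N ^ 2 / PI ^ 2 * (7 / 4 - / N) + N <= PI ^ 2 * N ^ 2 / 12.
Proof.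
  intros HN.
  pose proof PI_gt_31_10. set (X := PI ^ 2).
  assert (HX : 961 / 100 < X) by (unfold X; nra).
  apply Rmult_le_reg_r with X; [lra|].
  replace ((2 * N ^ 2 / X * (7 / 4 - / N) + N) * X) with (7 / 2 * N ^ 2 - 2 * N + X * N)
    by (field; lra).
  assert (X * X / 12 - 7 / 2 >= 0) by nra.
  assert (0 <= N * ((X * X / 12 - 7 / 2) * N - X + 2)).
  { apply Rmult_le_pos; [lra|]. nra. }
  nra.
Qed.

Lemma first_sum_le (n : nat) : (2 <= n)%nat ->
  sum_n_m (fun j => 1 / (xnode n j - xnode n 0)) 1 n <= PI ^ 2 * INR n ^ 2 / 12.
Proof.
  intros Hn. assert (HN : 2 <= INR n) by (apply (le_INR 2); lia).
  eapply Rle_trans.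
  { apply (sum_n_m_le_loc _ (fun j => 2 * INR n ^ 2 / PI ^ 2 * / INR j ^ 2 + 1)).
    apply inv_xnode_sub_first_le. }
  rewrite sum_n_m_add, sum_n_m_scal, sum_n_m_const.
  replace (S n - 1)%nat with n by lia.
  eapply Rle_trans; [|apply PI_sq_div_12_ge; exact HN].
  apply Rplus_le_compat; [|lra].
  pose proof PI_RGT_0.
  apply Rmult_le_compat_l; [apply Rdiv_le_0_compat; nra|].
  apply sum_inv_sq_le. exact Hn.
Qed.

Lemma PI_sq_div_12_lt (N : R) : 0 < N -> PI ^ 2 * N ^ 2 / 12 < 9 / 10 * N ^ 2.
Proof.
  intros HN. pose proof PI_lt_32_10. pose proof PI_RGT_0.
  assert (PI ^ 2 < 108 / 10) by nra.
  assert (0 < N ^ 2) by nra. nra.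
Qed.

Lemma interior_const_lt (N : R) : 0 < N ->
  N ^ 2 / (4 * sqrt 2) * (1 + ln 3 + 3 * ln 5) < 13 / 10 * N ^ 2.
Proof.
  intros HN.
  assert (Hs : 0 < sqrt 2) by (apply sqrt_lt_R0; lra).
  assert (sqrt 2 * sqrt 2 = 2) by (apply sqrt_sqrt; lra).
  assert (141 / 100 < sqrt 2) by nra.
  pose proof ln_3_le. pose proof ln_5_le.
  assert (0 < N ^ 2) by nra.
  apply Rmult_lt_reg_r with (4 * sqrt 2); [lra|].
  replace (N ^ 2 / (4 * sqrt 2) * (1 + ln 3 + 3 * ln 5) * (4 * sqrt 2))
    with (N ^ 2 * (1 + ln 3 + 3 * ln 5)) by (field; lra).
  nra.
Qed.

Theorem lemma8 (n : nat) (Hn : (2 <= n)%nat) :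
  (forall k : nat, (1 <= k)%nat -> (2 * k <= n)%nat ->
     (sum_n_m (fun j => 1 / (xnode n k - xnode n j)) 0 (k - 1)
        <= (1 + INR k * ln (4 * INR k - 1))
           / (2 * sin (INR k * PI / INR n) * sin (INR k * PI / (2 * INR n)))
      /\ (1 + INR k * ln (4 * INR k - 1))
           / (2 * sin (INR k * PI / INR n) * sin (INR k * PI / (2 * INR n)))
         <= INR n ^ 2 / (4 * sqrt 2 * INR k ^ 2) * (1 + INR k * ln (4 * INR k - 1)))
  /\ sum_n_m (fun j => 1 / (xnode n j - xnode n k)) (k + 1) n
       <= 3 * INR n ^ 2 / (4 * sqrt 2 * INR k) * ln (4 * INR k + 1)
  /\ sum_n_m (fun j => if Nat.eqb j k then 0 else 1 / Rabs (xnode n k - xnode n j)) 0 n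
       <= INR n ^ 2 / (4 * sqrt 2) * (1 + ln 3 + 3 * ln 5)
  /\ INR n ^ 2 / (4 * sqrt 2) * (1 + ln 3 + 3 * ln 5) < 13 / 10 * INR n ^ 2)
  /\
  (sum_n_m (fun j => 1 / (xnode n j - xnode n 0)) 1 n <= PI ^ 2 * INR n ^ 2 / 12
   /\ PI ^ 2 * INR n ^ 2 / 12 < 9 / 10 * INR n ^ 2).
Proof.
  assert (HN : 0 < INR n) by (apply lt_0_INR; lia).
  split.
  - intros k Hk Hkn.
    split; [split|split; [|split]].
    + apply left_sum_le; assumption.
    + apply left_bound_le; assumption.
    + apply right_sum_le; assumption.
    + apply sum_inv_abs_le; assumption.
    + apply interior_const_lt. exact HN.
  - split.
    + apply first_sum_le. exact Hn.
    + apply PI_sq_div_12_lt. exact HN.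
Qed.
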